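(* For the dilution model with $N$ items and $K$ defectives, random Bernoulli$(1/K)$ design and maximum-likelihood decoding, in the regime $N,K\to\infty$ with $K=o(N)$, a number of tests $T=O\!\left(\frac{K\log N}{(1-u)^2}\right)$ is achievable (arbitrarily small average error probability), where $u\in[0,1)$ is the crossover probability of the Z-channel (the probability that $1$ is flipped into $0$).
   Context: Design: $N\times T$ binary matrix with i.i.d. Bernoulli$(1/K)$ entries, $X_j(t)=1$ iff item $j$ is in test $t$. Dilution model: for defective set $S$ ($|S|=K$), $Y(t)=\bigvee_{j\in S}\mathcal Z_{j,t}(X_j(t))$, where each $\mathcal Z_{j,t}$ is an independent use of a Z-channel mapping input $0$ to $0$ with probability $1$ and input $1$ to $0$ with probability $u$ and to $1$ with probability $1-u$. The ML decoder chooses a $K$-subset $S'$ maximizing $p(Y^T\mid\mathbf X_{S'})$; average error probability is averaged over the design, the channel, and $S$ uniform among $K$-subsets. *)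

From HB Require Import structures.
From mathcomp Require Import all_boot all_order all_algebra.
From mathcomp Require Import all_classical all_reals all_analysis.
Set Implicit Arguments. Unset Strict Implicit. Unset Printing Implicit Defensive.
Import Order.TTheory GRing.Theory Num.Theory.
Local Open Scope ring_scope.

(* A test design: X (j,t) = true iff item j is in test t. *)
Definition design (N T : nat) := {ffun 'I_N * 'I_T -> bool}.
Definition outcome (T : nat) := {ffun 'I_T -> bool}.
Definition decoder (N T : nat) := design N T -> outcome T -> {set 'I_N}.

Section Model.
Variables (R : realType) (N K T : nat) (u : R).

Definition design_prob (X : design N T) : R :=
  \prod_(p : 'I_N * 'I_T) (if X p then (K%:R)^-1 else 1 - (K%:R)^-1).

Definition npos (X : design N T) (S : {set 'I_N}) (t : 'I_T) : nat :=
  #|[set j in S | X (j, t)]|.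

(* Likelihood p(Y^T | X_S) in the dilution model: each present defective
   passes through an independent Z-channel (1 -> 0 w.p. u), then OR. *)
Definition lik (X : design N T) (S : {set 'I_N}) (Y : outcome T) : R :=
  \prod_(t : 'I_T)
    (if Y t then 1 - u ^+ npos X S t else u ^+ npos X S t).

Definition is_ML_decoder (dec : decoder N T) : Prop :=
  forall (X : design N T) (Y : outcome T),
    #|dec X Y| = K /\
    forall S' : {set 'I_N}, #|S'| = K -> lik X S' Y <= lik X (dec X Y) Y.

Definition avg_err (dec : decoder N T) : R :=
  \sum_(S : {set 'I_N} | #|S| == K)
    ('C(N, K)%:R)^-1 *
    \sum_(X : design N T) design_prob X *
      \sum_(Y : outcome T) lik X S Y * (dec X Y != S)%:R.

End Model.

From HB Require Import structures.
From mathcomp Require Import all_boot all_order all_algebra.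
From mathcomp Require Import all_classical all_reals all_analysis.
From mathcomp Require Import lra ring.
Set Implicit Arguments.
Unset Strict Implicit.
Unset Printing Implicit Defensive.
Import Order.TTheory GRing.Theory Num.Theory numFieldNormedType.Exports.
Local Open Scope classical_set_scope.
Local Open Scope ring_scope.

(* Union-Bhattacharyya bound.  If the ML decoder errs on S, some K-set S' <> S
   is at least as likely as S, so lik(S) [dec <> S] <= sum_S' sqrt(lik S lik S').
   Summed over the outcomes this factors over the tests, and averaged over the
   i.i.d. design it becomes rho(S,S')^T, where rho is the Bhattacharyya
   coefficient of one test averaged over a random column.  Every column has
   coefficient at most 1, and a column whose only item of S u S' is some
   j in the symmetric difference D has coefficient sqrt u and probability at
   least e^-4/K.  Hence rho <= 1 - (1 - sqrt u) |D| e^-4/K, and since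
   1 - sqrt u >= (1-u)^2/4, T >= 8 e^4 K ln N/(1-u)^2 gives rho^T <= N^(-2|D|).
   Summing over all S' <> S bounds the error by (1 + N^-2)^N - 1 <= 2/N. *)

Lemma sum_ffun_bool_prod (R : comPzSemiRingType) (I : finType) (F : I -> bool -> R) :
  \sum_(g : {ffun I -> bool}) \prod_i F i (g i) = \prod_i (F i true + F i false).
Proof. by rewrite -bigA_distr_bigA; apply: eq_bigr => i _; rewrite big_bool. Qed.

Lemma sum_expr_card_set (R : comPzSemiRingType) (I : finType) (q : R) :
  \sum_(A : {set I}) q ^+ #|A| = (1 + q) ^+ #|I|.
Proof.
rewrite addrC -prodr_const.
rewrite -[RHS](@sum_ffun_bool_prod _ _ (fun _ b => if b then q else 1)).
rewrite (reindex (fun g : {ffun I -> bool} => [set i | g i]%SET)) /=; last first.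
  exists (fun A : {set I} => [ffun i => i \in A]) => [g _ | A _].
    by apply/ffunP => i; rewrite ffunE inE.
  by apply/finset.setP => i; rewrite inE ffunE.
apply: eq_bigr => g _; rewrite -big_mkcond /= -prodr_const.
by apply: eq_bigl => i; rewrite inE.
Qed.

Lemma sum_ffun_prod_columns (R : comPzSemiRingType) (I J B : finType)
    (w : B -> R) (g : {ffun I -> B} -> R) :
  \sum_(X : {ffun I * J -> B}) (\prod_p w (X p)) * \prod_(t : J) g [ffun i => X (i, t)]
  = (\sum_(x : {ffun I -> B}) (\prod_i w (x i)) * g x) ^+ #|J|.
Proof.
rewrite -prodr_const bigA_distr_bigA /=.
rewrite (reindex (fun f : {ffun J -> {ffun I -> B}} => [ffun p : I * J => f p.2 p.1])) /=.
  apply: eq_bigr => f _; rewrite big_split /=; congr (_ * _).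
    rewrite (eq_bigr (fun p => w (f p.2 p.1))) => [|p _]; last by rewrite ffunE.
    by rewrite -(pair_bigA _ (fun i t => w (f t i))) exchange_big.
  by apply: eq_bigr => t _; congr (g _); apply/ffunP => i; rewrite !ffunE.
exists (fun X : {ffun I * J -> B} => [ffun t => [ffun i => X (i, t)]]) => X _.
  by apply/ffunP => t; apply/ffunP => i; rewrite !ffunE.
by apply/ffunP => -[i t]; rewrite !ffunE.
Qed.

Lemma prodr_natb (R : comPzSemiRingType) (I : finType) (b : I -> bool) :
  \prod_i (b i)%:R = [forall i, b i]%:R :> R.
Proof.
have [/forallP bT | /forallPn [i biF]] := boolP [forall i, b i].
  by rewrite big1 // => i _; rewrite bT.
by rewrite (bigD1 i) //= (negbTE biF) mul0r.
Qed.

Lemma sqrtr_prod (R : rcfType) (I : finType) (F : I -> R) :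
  (forall i, 0 <= F i) -> Num.sqrt (\prod_i F i) = \prod_i Num.sqrt (F i).
Proof.
move=> F_ge0; elim/big_rec2: _ => [|i x y _ <-]; first by rewrite sqrtr1.
by rewrite sqrtrM.
Qed.

Lemma sqrtrM_le_avg (R : rcfType) (a b : R) :
  0 <= a -> 0 <= b -> Num.sqrt (a * b) <= (a + b) / 2.
Proof.
move=> a0 b0; rewrite sqrtrM //.
have := sqr_ge0 (Num.sqrt a - Num.sqrt b).
have := sqr_sqrtr a0; have := sqr_sqrtr b0; nra.
Qed.

Lemma sqr_1B_div4_le_1B_sqrtr (R : rcfType) (u : R) :
  0 <= u <= 1 -> (1 - u) ^+ 2 / 4 <= 1 - Num.sqrt u.
Proof.
move=> /andP[u0 u1]; set s := Num.sqrt u.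
have s0 : 0 <= s := sqrtr_ge0 u.
have s1 : s <= 1 by rewrite -sqrtr1 ler_wsqrtr.
rewrite -(sqr_sqrtr u0) -/s.
have hs : (1 - s) * (1 + s) ^+ 2 <= 4.
  have : 0 <= s * (1 + s) ^+ 2 by rewrite mulr_ge0 ?sqr_ge0.
  rewrite expr2; nra.
have -> : (1 - s ^+ 2) ^+ 2 / 4 = (1 - s) * ((1 - s) * (1 + s) ^+ 2) / 4.
  by rewrite !expr2; field.
nra.
Qed.

Section ExpBounds.
Variable R : realType.

Lemma expR_le_1D2x (x : R) : 0 <= x <= 1 / 2 -> expR x <= 1 + 2 * x.
Proof.
move=> /andP[x0 x2].
have := expR_ge1Dx (- x); have := expR_gt0 x; have := expRxMexpNx_1 x; nra.
Qed.

Lemma expRN2x_le_1B (x : R) : 0 <= x <= 1 / 2 -> expR (- (2 * x)) <= 1 - x.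
Proof.
move=> /andP[x0 x2].
have := expR_ge1Dx (2 * x); have := expR_gt0 (2 * x).
have := expRxMexpNx_1 (2 * x); nra.
Qed.

Lemma expRN4_le_1B_invn_pow (k : nat) :
  (2 <= k)%N -> expR (-4) <= (1 - k%:R^-1) ^+ (2 * k) :> R.
Proof.
move=> k2.
have k0 : (0 : R) < k%:R by rewrite ltr0n (leq_trans _ k2).
have k2r : (2 : R) <= k%:R by rewrite ler_nat.
have p0 : 0 < k%:R^-1 :> R by rewrite invr_gt0.
have -> : expR (-4) = expR (- (2 * k%:R^-1)) ^+ (2 * k) :> R.
  rewrite -expRM_natr natrM; congr expR; field; exact: lt0r_neq0.
apply: lerXn2r; rewrite ?nnegrE ?expR_ge0 ?expRN2x_le_1B //.
  by rewrite subr_ge0 invf_le1 // ler1n (leq_trans _ k2).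
by rewrite ltW //= mul1r lef_pV2 ?posrE.
Qed.

Lemma pow_1D_invn_sqr_le (n : nat) :
  (2 <= n)%N -> (1 + (n%:R ^+ 2)^-1) ^+ n - 1 <= 2 / n%:R :> R.
Proof.
move=> n2.
have n0 : (0 : R) < n%:R by rewrite ltr0n (leq_trans _ n2).
have n2r : (2 : R) <= n%:R by rewrite ler_nat.
have x0 : 0 < n%:R^-1 :> R by rewrite invr_gt0.
have nx : n%:R^-1 * n%:R = 1 :> R by rewrite mulVf ?gt_eqF.
have q0 : 0 <= (n%:R ^+ 2)^-1 :> R by rewrite invr_ge0 sqr_ge0.
suff : (1 + (n%:R ^+ 2)^-1) ^+ n <= expR (n%:R^-1) :> R.
  have : expR (n%:R^-1) <= 1 + 2 * n%:R^-1 :> R.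
    by rewrite expR_le_1D2x // ltW //= mul1r lef_pV2 ?posrE.
  by rewrite mulrC; lra.
apply: (@le_trans _ _ (expR ((n%:R ^+ 2)^-1) ^+ n)).
  by apply: lerXn2r; rewrite ?nnegrE ?expR_ge0 ?addr_ge0 ?expR_ge1Dx.
by rewrite -expRM_natr expr2 invfM -mulrA nx mulr1.
Qed.

End ExpBounds.

Section Model.
Variables (R : realType) (N K T : nat) (u : R).
Hypotheses (u_ge0 : 0 <= u) (u_le1 : u <= 1) (K_ge2 : (2 <= K)%N).
Implicit Types (S U A : {set 'I_N}) (x : {ffun 'I_N -> bool}).
Implicit Types (X : design N T) (Y : outcome T).

Definition column X (t : 'I_T) : {ffun 'I_N -> bool} :=
  [ffun j => X (j, t)].

Definition hits S x : nat :=
  #|[set j in S | x j]%SET|.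

Definition bern (b : bool) : R := if b then K%:R^-1 else 1 - K%:R^-1.

Definition column_prob x : R := \prod_j bern (x j).

Definition bhatt S S' x : R :=
  Num.sqrt (u ^+ hits S x * u ^+ hits S' x) +
  Num.sqrt ((1 - u ^+ hits S x) * (1 - u ^+ hits S' x)).

Definition bhatt_avg S S' : R :=
  \sum_(x : {ffun 'I_N -> bool}) column_prob x * bhatt S S' x.

Definition symdiff S S' : {set 'I_N} := (S :\: S') :|: (S' :\: S).

Lemma bern_ge0 b : 0 <= bern b.
Proof.
have K_ge1 : (1 <= K)%N by apply: leq_trans K_ge2.
by case: b; rewrite /bern ?invr_ge0 // subr_ge0 invf_le1 ?ler1n ?ltr0n.
Qed.

Lemma column_prob_ge0 x : 0 <= column_prob x.
Proof. by apply: prodr_ge0 => j _; apply: bern_ge0. Qed.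

Lemma sum_column_prob : \sum_(x : {ffun 'I_N -> bool}) column_prob x = 1.
Proof.
rewrite (@sum_ffun_bool_prod _ _ (fun _ b => bern b)) big1 // => j _.
by rewrite /bern subrKC.
Qed.

Lemma design_prob_ge0 X : 0 <= design_prob R K X.
Proof. by apply: prodr_ge0 => p _; apply: (bern_ge0 (X p)). Qed.

Lemma lik_factor_ge0 (b : bool) n : 0 <= (if b then 1 - u ^+ n else u ^+ n).
Proof. by case: b; rewrite ?subr_ge0 ?exprn_ile1 ?exprn_ge0. Qed.

Lemma lik_ge0 X S Y : 0 <= lik u X S Y.
Proof. by apply: prodr_ge0 => t _; apply: lik_factor_ge0. Qed.

Lemma sum_sqrt_lik X S S' :
  \sum_(Y : outcome T) Num.sqrt (lik u X S Y * lik u X S' Y)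
  = \prod_t bhatt S S' (column X t).
Proof.
have npos_hits A t : npos X A t = hits A (column X t).
  by apply: eq_card => j; rewrite !inE ffunE.
pose F t (b : bool) := Num.sqrt
  ((if b then 1 - u ^+ npos X S t else u ^+ npos X S t) *
   (if b then 1 - u ^+ npos X S' t else u ^+ npos X S' t)).
transitivity (\sum_(Y : outcome T) \prod_t F t (Y t)).
  apply: eq_bigr => Y _; rewrite /lik -big_split sqrtr_prod // => t.
  exact: mulr_ge0 (lik_factor_ge0 _ _) (lik_factor_ge0 _ _).
rewrite sum_ffun_bool_prod.
by apply: eq_bigr => t _; rewrite /F /bhatt !npos_hits addrC.
Qed.

Lemma sum_design_prob_bhatt S S' :
  \sum_(X : design N T) design_prob R K X * \prod_t bhatt S S' (column X t)
  = bhatt_avg S S' ^+ T.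
Proof. by rewrite -[T in RHS]card_ord -sum_ffun_prod_columns. Qed.

Definition isolated U (j : 'I_N) x : bool :=
  [forall k, if k == j then x k else (k \in U) ==> ~~ x k].

Lemma isolated_uniq U (j j' : 'I_N) x :
  j' \in U -> isolated U j x -> isolated U j' x -> j' = j.
Proof.
move=> j'U /forallP /(_ j') isoj /forallP /(_ j'); rewrite eqxx.
by case: eqP isoj => // _; rewrite j'U => /negbTE ->.
Qed.

Lemma hits_isolated U A j x :
  A \subset U -> isolated U j x -> hits A x = (j \in A).
Proof.
move=> AU /forallP iso; rewrite /hits.
case jA: (j \in A) => /=; [rewrite -(cards1 j) | rewrite -(cards0 'I_N)];
  apply: eq_card => k; rewrite !inE; have := iso k.
all: case: (eqVneq k j) => [-> -> | _]; rewrite ?jA //.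
all: by case kA: (k \in A); rewrite //= (fintype.subsetP AU k kA) => /negbTE.
Qed.

Lemma bhatt_ge0 S S' x : 0 <= bhatt S S' x.
Proof. by rewrite /bhatt addr_ge0 ?sqrtr_ge0. Qed.

Lemma bhatt_le1 S S' x : bhatt S S' x <= 1.
Proof.
rewrite /bhatt; set a := u ^+ hits S x; set b := u ^+ hits S' x.
have a0 : 0 <= a := exprn_ge0 _ u_ge0; have b0 : 0 <= b := exprn_ge0 _ u_ge0.
have a1 : 0 <= 1 - a by rewrite subr_ge0 exprn_ile1.
have b1 : 0 <= 1 - b by rewrite subr_ge0 exprn_ile1.
have := sqrtrM_le_avg a0 b0; have := sqrtrM_le_avg a1 b1; lra.
Qed.

Lemma symdiff_subU S S' : symdiff S S' \subset S :|: S'.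
Proof.
by apply/fintype.subsetP => j; rewrite !inE; case: (j \in S); case: (j \in S').
Qed.

Lemma bhatt_isolated S S' j x :
  j \in symdiff S S' -> isolated (S :|: S') j x -> bhatt S S' x = Num.sqrt u.
Proof.
move=> jD iso.
rewrite /bhatt !(hits_isolated _ iso) ?finset.subsetUl ?finset.subsetUr //.
move: jD; rewrite !inE; case: (j \in S); case: (j \in S') => //= _.
  by rewrite expr1 expr0 subrr !(mulr0, mulr1) sqrtr0 addr0.
by rewrite expr1 expr0 subrr !(mul0r, mul1r) sqrtr0 addr0.
Qed.

Lemma bhatt_le_isolated S S' x :
  bhatt S S' x <=
  1 - (1 - Num.sqrt u) * \sum_(j in symdiff S S') (isolated (S :|: S') j x)%:R.
Proof.
have [j /andP[jD iso] | none] :=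
  pickP (fun j => (j \in symdiff S S') && isolated (S :|: S') j x).
  rewrite (bigD1 j) //= iso big1 ?addr0 => [|j' /andP[j'D j'j]].
    by rewrite (bhatt_isolated jD iso) mulr1 subKr.
  have j'U := fintype.subsetP (symdiff_subU S S') j' j'D.
  case iso' : (isolated _ j' x) => //.
  by rewrite (isolated_uniq j'U iso iso') eqxx in j'j.
rewrite big1 ?mulr0 ?subr0 ?bhatt_le1 // => j jD.
by have := none j; rewrite jD => /= ->.
Qed.

Lemma column_prob_isolated_ge U j :
  (#|U| <= 2 * K)%N ->
  K%:R^-1 * expR (-4) <= \sum_x column_prob x * (isolated U j x)%:R.
Proof.
move=> UK.
pose F k b := bern b * (if k == j then b else (k \in U) ==> ~~ b)%:R.
have -> : \sum_x column_prob x * (isolated U j x)%:R = \prod_k (F k true + F k false).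
  rewrite -sum_ffun_bool_prod; apply: eq_bigr => x _.
  by rewrite /column_prob /isolated -prodr_natb -big_split.
rewrite (bigD1 j) //= /F eqxx mulr1 mulr0 addr0 ler_wpM2l ?bern_ge0 //.
rewrite (eq_bigr (fun k => if k \in U then bern false else 1)); last first.
  move=> k /negbTE kj.
  by rewrite kj; case: (k \in U); rewrite /= ?mulr0 ?mulr1 ?add0r // /bern subrKC.
rewrite -big_mkcondr /= prodr_const.
apply: (le_trans (@expRN4_le_1B_invn_pow R K K_ge2)).
apply: ler_wiXn2l; [exact: bern_ge0 false | by rewrite gerBl invr_ge0 |].
apply: leq_trans UK; apply: subset_leq_card.
by apply/fintype.subsetP => k; rewrite unfold_in => /andP[].
Qed.

Lemma bhatt_avg_le S S' : #|S| = K -> #|S'| = K ->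
  bhatt_avg S S' <=
  1 - (1 - Num.sqrt u) * (#|symdiff S S'|%:R * (K%:R^-1 * expR (-4))).
Proof.
move=> SK S'K.
have su_le1 : 0 <= 1 - Num.sqrt u by rewrite subr_ge0 -sqrtr1 ler_wsqrtr.
have UK : (#|S :|: S'| <= 2 * K)%N by rewrite cardsU SK S'K mul2n -addnn leq_subr.
apply: (@le_trans _ _ (\sum_x column_prob x *
   (1 - (1 - Num.sqrt u) * \sum_(j in symdiff S S') (isolated (S :|: S') j x)%:R))).
  by apply: ler_sum => x _; rewrite ler_wpM2l ?column_prob_ge0 ?bhatt_le_isolated.
under eq_bigr => x _ do rewrite mulrBr mulr1 mulrCA mulr_sumr.
rewrite sumrB sum_column_prob lerD2l lerN2 -mulr_sumr ler_wpM2l // exchange_big /=.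
rewrite mulr_natl -sumr_const; apply: ler_sum => j _.
exact: column_prob_isolated_ge.
Qed.

Lemma bhatt_avg_ge0 S S' : 0 <= bhatt_avg S S'.
Proof. by apply: sumr_ge0 => x _; rewrite mulr_ge0 ?column_prob_ge0 ?bhatt_ge0. Qed.

Lemma avg_err_ge0 (dec : decoder N T) : 0 <= avg_err K u dec.
Proof.
rewrite sumr_ge0 // => S _; rewrite mulr_ge0 ?invr_ge0 ?ler0n ?sumr_ge0 // => X _.
rewrite mulr_ge0 ?design_prob_ge0 ?sumr_ge0 // => Y _.
by rewrite mulr_ge0 ?lik_ge0 ?ler0n.
Qed.

Lemma sum_pow_card_symdiff S (q : R) :
  \sum_(S' : {set 'I_N}) q ^+ #|symdiff S S'| = (1 + q) ^+ N.
Proof.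
have symdiffK A : symdiff S (symdiff S A) = A.
  by apply/finset.setP => j; rewrite !inE; case: (j \in S); case: (j \in A).
rewrite -[N in RHS]card_ord -sum_expr_card_set (reindex (symdiff S)) /=.
  by apply: eq_bigr => A _; rewrite symdiffK.
by exists (symdiff S) => A _; rewrite symdiffK.
Qed.

Lemma ML_err_le_sum_sqrt_lik (dec : decoder N T) X Y S :
  is_ML_decoder K u dec -> #|S| = K ->
  lik u X S Y * (dec X Y != S)%:R <=
  \sum_(S' | (S' != S) && (#|S'| == K)) Num.sqrt (lik u X S Y * lik u X S' Y).
Proof.
move=> ML SK.
have sum_ge0 P : 0 <= \sum_(S' | P S') Num.sqrt (lik u X S Y * lik u X S' Y).
  by rewrite sumr_ge0 // => S' _; apply: sqrtr_ge0.
have [_ | decS] := eqVneq (dec X Y) S; first by rewrite mulr0 sum_ge0.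
have [decK dec_max] := ML X Y.
rewrite mulr1 (bigD1 (dec X Y)) /=; last by rewrite decS decK eqxx.
rewrite -[e in e <= _]addr0 lerD ?sum_ge0 //.
rewrite -[lik u X S Y in e in e <= _]ger0_norm ?lik_ge0 // -sqrtr_sqr expr2.
by rewrite ler_wsqrtr // ler_wpM2l ?lik_ge0 ?dec_max.
Qed.

Section Rate.
Hypotheses (N_ge2 : (2 <= N)%N) (u_lt1 : u < 1).
Hypothesis T_ge : 8 * expR 4 * K%:R * ln N%:R / (1 - u) ^+ 2 <= T%:R.

Lemma bhatt_avg_pow_le S S' : #|S| = K -> #|S'| = K ->
  bhatt_avg S S' ^+ T <= (N%:R ^+ 2)^-1 ^+ #|symdiff S S'|.
Proof.
move=> SK S'K.
have K0 : (0 : R) < K%:R by rewrite ltr0n (leq_trans _ K_ge2).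
have N0 : (0 : R) < N%:R by rewrite ltr0n (leq_trans _ N_ge2).
have u1 : 0 < 1 - u by rewrite subr_gt0.
set d : R := #|symdiff S S'|%:R.
set y := (1 - u) ^+ 2 / 4 * (d * (K%:R^-1 * expR (-4))).
have y0 : 0 <= y by rewrite /y /d !mulr_ge0 ?invr_ge0 ?ler0n ?expR_ge0 ?(ltW u1).
have rho_le : bhatt_avg S S' <= expR (- y).
  apply: le_trans (bhatt_avg_le SK S'K) _; apply: le_trans (expR_ge1Dx _).
  rewrite lerD2l lerN2 ler_wpM2r ?sqr_1B_div4_le_1B_sqrtr ?u_ge0 ?u_le1 //.
  by rewrite !mulr_ge0 ?invr_ge0 ?ler0n ?expR_ge0.
apply: (@le_trans _ _ (expR (- y) ^+ T)).
  apply: lerXn2r; rewrite ?nnegrE ?expR_ge0 //.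
  exact: bhatt_avg_ge0.
have -> : (N%:R ^+ 2)^-1 ^+ #|symdiff S S'| =
          expR (- (ln N%:R * (2 * #|symdiff S S'|)%:R)) :> R.
  by rewrite expRN expRM_natr lnK ?posrE // exprVn exprM.
have yT : y * (8 * expR 4 * K%:R * ln N%:R / (1 - u) ^+ 2) =
          ln N%:R * (2 * #|symdiff S S'|)%:R :> R.
  by rewrite /y /d natrM expRN; field; rewrite ?gt_eqF ?expR_gt0.
by rewrite -expRM_natr ler_expR mulNr lerN2 -yT ler_wpM2l.
Qed.

Lemma err_given_le (dec : decoder N T) S : is_ML_decoder K u dec -> #|S| = K ->
  \sum_X design_prob R K X * \sum_Y lik u X S Y * (dec X Y != S)%:R
  <= (1 + (N%:R ^+ 2)^-1) ^+ N - 1.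
Proof.
move=> ML SK; set q : R := (N%:R ^+ 2)^-1.
apply: (@le_trans _ _ (\sum_(S' | (S' != S) && (#|S'| == K)) bhatt_avg S S' ^+ T)).
  under [r in _ <= r]eq_bigr => S' _ do rewrite -sum_design_prob_bhatt.
  rewrite exchange_big /=; apply: ler_sum => X _.
  rewrite -mulr_sumr ler_wpM2l ?design_prob_ge0 //.
  under [r in _ <= r]eq_bigr => S' _ do rewrite -sum_sqrt_lik.
  rewrite exchange_big /=; apply: ler_sum => Y _.
  exact: ML_err_le_sum_sqrt_lik.
apply: (@le_trans _ _ (\sum_(S' | S' != S) q ^+ #|symdiff S S'|)).
  rewrite [r in _ <= r](bigID (fun S' => #|S'| == K)) /= -[l in l <= _]addr0 lerD //.
    by apply: ler_sum => S' /andP[_ /eqP S'K]; apply: bhatt_avg_pow_le.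
  by rewrite sumr_ge0 // => S' _; rewrite exprn_ge0 ?invr_ge0 ?sqr_ge0.
rewrite -(sum_pow_card_symdiff S q) [r in _ <= r - 1](bigD1 S) //=.
have -> : symdiff S S = finset.set0.
  by apply/finset.setP => j; rewrite !inE; case: (j \in S).
by rewrite cards0 expr0 addrC addrK.
Qed.

Lemma avg_err_le (dec : decoder N T) :
  is_ML_decoder K u dec -> avg_err K u dec <= 2 / N%:R.
Proof.
move=> ML; set b : R := (1 + (N%:R ^+ 2)^-1) ^+ N - 1.
apply: (@le_trans _ _ b); last exact: pow_1D_invn_sqr_le.
apply: (@le_trans _ _ (\sum_(S : {set 'I_N} | #|S| == K) 'C(N, K)%:R^-1 * b)).
  by apply: ler_sum => S /eqP SK; rewrite ler_wpM2l ?invr_ge0 ?ler0n ?err_given_le.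
rewrite (eq_bigl [in [set S : {set 'I_N} | #|S| == K]%SET]) => [|S]; last by rewrite inE.
rewrite sumr_const card_draws card_ord -[_ *+ 'C(N, K)]mulr_natl mulrA.
have [-> | CNK0] := eqVneq 'C(N, K) 0%N.
  by rewrite !mul0r subr_ge0 exprn_ege1 // lerDl invr_ge0 sqr_ge0.
by rewrite mulfV ?mul1r // pnatr_eq0.
Qed.

End Rate.

End Model.


Lemma cvg_invn_pinfty (R : realType) (N : nat -> nat) :
  (forall M, \forall n \near \oo, (M <= N n)%N) ->
  (((N n)%:R : R)^-1 @[n --> \oo] --> 0).
Proof.
move=> /cvgnyPge N_oo.
have N_gt0 : \forall n \near \oo, (0 : R) < (N n)%:R.
  by apply: filterS ((cvgnyPge _).1 N_oo 1%N) => n; rewrite ltr0n.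
apply/(gtr0_cvgV0 N_gt0).
exact: cvg_comp N_oo cvgr_idn.
Qed.

Theorem theorem9 (R : realType) :
  exists C : R, 0 < C /\
  forall (u : R), 0 <= u < 1 ->
  forall (N K T : nat -> nat) (dec : forall n, decoder (N n) (T n)),
    (forall n, is_ML_decoder (K n) u (dec n)) ->
    (forall M : nat, \forall n \near \oo, (M <= N n)%N) ->
    (forall M : nat, \forall n \near \oo, (M <= K n)%N) ->
    ((fun n => (K n)%:R / (N n)%:R : R) @ \oo --> 0) ->
    (forall n, C * (K n)%:R * ln ((N n)%:R) / (1 - u) ^+ 2 <= (T n)%:R) ->
    ((fun n => avg_err (K n) u (dec n)) @ \oo --> 0).
Proof.
exists (8 * expR 4); split; first by rewrite mulr_gt0 ?expR_gt0.
(* The error bound 2/N does not use the hypothesis K = o(N). *)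
move=> u /andP[u_ge0 u_lt1] N K T dec ML N_oo K_oo _ T_ge.
have u_le1 := ltW u_lt1.
have two_div_N : (2 * ((N n)%:R)^-1 : R) @[n --> \oo] --> 0.
  by rewrite -(mulr0 2); apply: cvgMr; apply: cvg_invn_pinfty.
have bounds : \forall n \near \oo, 0 <= avg_err (K n) u (dec n) <= 2 * (N n)%:R^-1.
  apply: filterS2 (N_oo 2%N) (K_oo 2%N) => n N_ge2 K_ge2.
  by rewrite avg_err_ge0 // avg_err_le.
by apply: (squeeze_cvgr bounds); [exact: cvg_cst | exact: two_div_N].
Qed.
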